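(* Let $(V,m)$ be a discrete measure space and $L$ a locally finite selfadjoint operator on $\ell^2(V,m)$ with kernel $l$. Then for $\varphi\in C(V)$ and $\lambda\in\mathbb{R}$ the following are equivalent: (i) $\varphi$ is a generalized eigenfunction of $L$ to the eigenvalue $\lambda$; (ii) $\varphi$ is a $C_c(V)$-eigenfunction of $L$ to the eigenvalue $\lambda$, where $\varphi$ is regarded as the linear functional $u\mapsto(\varphi,u)_m$ on $C_c(V)$.
   Context: A discrete measure space $(V,m)$ is a finite or countable set $V$ with $m:V\to(0,\infty)$; $C(V)$ is the set of all functions $V\to\mathbb{C}$, $C_c(V)$ those of finite support; $\ell^2(V,m)$ has inner product $\langle v,u\rangle=\sum_x\overline{v(x)}u(x)m(x)$. An operator $L$ on $\ell^2(V,m)$ is locally finite if $C_c(V)\subset D(L)$ and there is $l:V\times V\to\mathbb{C}$ with $\{y:l(x,y)\ne0\}$ finite for each $x$ such that $L$ is a restriction of $\tilde L$, $(\tilde Lw)(x)=\sum_y l(x,y)w(y)m(y)$, $w\in C(V)$. $\varphi\in C(V)$ is a generalized eigenfunction to $\lambda$ if $(\tilde L-\lambda)\varphi\equiv0$. The pairing is $(g,u)_m=\sum_x\overline{g(x)}u(x)m(x)$ for $g\in C(V)$, $u\in C_c(V)$. A linear functional $\varphi$ on $C_c(V)$ is a $C_c(V)$-eigenfunction of $L$ to $\lambda$ if $(\varphi,Lu)=\lambda(\varphi,u)$ for all $u\in C_c(V)\cap D(L)$ with $Lu\in C_c(V)$. *)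

From Stdlib Require Import Reals List ClassicalEpsilon.
From Coquelicot Require Import Coquelicot.
Set Implicit Arguments.
Open Scope R_scope.

Section Discrete.
Variable V : Type.

Definition sum_list (f : V -> C) (F : list V) : C :=
  fold_right (fun x acc => Cplus (f x) acc) (RtoC 0) F.

(* unconditional (net) summation over V: f is summable with sum S *)
Definition has_sum (f : V -> C) (S : C) : Prop :=
  forall eps : R, 0 < eps -> exists F0 : list V,
    forall F : list V, NoDup F -> incl F0 F ->
      Cmod (Cminus (sum_list f F) S) < eps.

Definition tsum (f : V -> C) : C :=
  epsilon (inhabits (RtoC 0)) (fun S => has_sum f S).

Definition finsupp (u : V -> C) : Prop :=
  exists s : list V, forall x, u x <> RtoC 0 -> In x s.

Definition l2 (m : V -> R) (u : V -> C) : Prop :=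
  exists S : C, has_sum (fun x => RtoC (Cmod (u x) ^ 2 * m x)) S.

(* <v,u> = sum_x conj(v x) u x m x ; also the pairing (g,u)_m *)
Definition ip (m : V -> R) (v u : V -> C) : C :=
  tsum (fun x => Cmult (Cmult (Cconj (v x)) (u x)) (RtoC (m x))).

Definition Ltilde (m : V -> R) (l : V -> V -> C) (w : V -> C) (x : V) : C :=
  tsum (fun y => Cmult (Cmult (l x y) (w y)) (RtoC (m y))).

(* An (unbounded) operator on l^2(V,m): domain D, action L (meaningful on D). *)
Definition is_operator (m : V -> R) (D : (V -> C) -> Prop) (L : (V -> C) -> (V -> C)) : Prop :=
  (forall u, D u -> l2 m u) /\
  (forall u, D u -> l2 m (L u)) /\
  D (fun _ => RtoC 0) /\
  (forall (a b : C) u v, D u -> D v ->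
     D (fun x => Cplus (Cmult a (u x)) (Cmult b (v x))) /\
     forall x, L (fun y => Cplus (Cmult a (u y)) (Cmult b (v y))) x
               = Cplus (Cmult a (L u x)) (Cmult b (L v x))).

Definition selfadjoint (m : V -> R) (D : (V -> C) -> Prop) (L : (V -> C) -> (V -> C)) : Prop :=
  is_operator m D L /\
  (forall v, D v <->
     (l2 m v /\ exists w, l2 m w /\ forall u, D u -> ip m v (L u) = ip m w u)) /\
  (forall v w, D v -> l2 m w -> (forall u, D u -> ip m v (L u) = ip m w u) ->
     forall x, L v x = w x).

Definition locally_finite_kernel (m : V -> R) (D : (V -> C) -> Prop)
    (L : (V -> C) -> (V -> C)) (l : V -> V -> C) : Prop :=
  (forall u, finsupp u -> D u) /\
  (forall x, exists s : list V, forall y, l x y <> RtoC 0 -> In y s) /\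
  (forall w, D w -> forall x, L w x = Ltilde m l w x).

Definition gen_eigenfunction (m : V -> R) (l : V -> V -> C) (phi : V -> C) (lam : R) : Prop :=
  forall x, Ltilde m l phi x = Cmult (RtoC lam) (phi x).

Definition Cc_eigenfunction (m : V -> R) (D : (V -> C) -> Prop) (L : (V -> C) -> (V -> C))
    (phi : V -> C) (lam : R) : Prop :=
  forall u, finsupp u -> D u -> finsupp (L u) ->
    ip m phi (L u) = Cmult (RtoC lam) (ip m phi u).
End Discrete.

From Stdlib Require Import Reals List ClassicalEpsilon FunctionalExtensionality Permutation Lra.
From Coquelicot Require Import Coquelicot.
Set Implicit Arguments.
Open Scope R_scope.

(* Both directions rest on one identity: for a Hermitian kernel [l] with finite
   rows and finitely supported [u], all sums in [(phi, L~ u)_m = (L~ phi, u)_m]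
   are finite, so the two sides are the same double sum.  Hermitian symmetry of
   [l] itself comes from selfadjointness, tested on point masses [delta y], on
   which [L] acts as the column [l . y m(y)].  Given the identity, (i) -> (ii)
   is immediate, and (ii) -> (i) follows by testing against [delta y]. *)

Section FiniteSums.
Variable V : Type.

Definition vdec (x y : V) : {x = y} + {x <> y} := excluded_middle_informative (x = y).

Definition supported_in (f : V -> C) (s : list V) : Prop :=
  forall x, f x <> RtoC 0 -> In x s.

Lemma sum_list_perm (f : V -> C) F G : Permutation F G -> sum_list f F = sum_list f G.
Proof.
  induction 1; simpl; try congruence.
  unfold sum_list; simpl; ring.
Qed.

Lemma sum_list_ext (f g : V -> C) F :
  (forall x, In x F -> f x = g x) -> sum_list f F = sum_list g F.
Proof.
  induction F as [|a F IH]; simpl; intros H; auto.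
  rewrite H, IH; auto.
Qed.

Lemma sum_list_filter (f : V -> C) (P : V -> bool) F :
  (forall x, In x F -> P x = false -> f x = RtoC 0) ->
  sum_list f F = sum_list f (filter P F).
Proof.
  induction F as [|a F IH]; cbn [filter In]; intros H; auto.
  destruct (P a) eqn:Pa; simpl; rewrite IH by auto; auto.
  rewrite H by auto. ring.
Qed.

Lemma sum_list_supported (f : V -> C) s F :
  NoDup s -> NoDup F -> incl s F -> supported_in f s -> sum_list f F = sum_list f s.
Proof.
  intros Ns NF sF fs.
  pose (P x := if in_dec vdec x s then true else false).
  rewrite (sum_list_filter f P F).
  - apply sum_list_perm, NoDup_Permutation; auto using NoDup_filter.
    intros x. rewrite filter_In. unfold P.
    destruct (in_dec vdec x s); split; intros Hx; auto.
    destruct Hx; discriminate.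
  - intros x _. unfold P. destruct (in_dec vdec x s); try discriminate.
    intros _. destruct (excluded_middle_informative (f x = RtoC 0)); auto.
    exfalso; auto.
Qed.

Lemma sum_list_conj (f : V -> C) F :
  Cconj (sum_list f F) = sum_list (fun x => Cconj (f x)) F.
Proof.
  induction F as [|a F IH]; simpl.
  - apply injective_projections; simpl; ring.
  - rewrite Cplus_conj, IH. reflexivity.
Qed.

Lemma sum_list_scalel (f : V -> C) c F :
  (c * sum_list f F)%C = sum_list (fun x => c * f x)%C F.
Proof. induction F as [|a F IH]; simpl; [ring | rewrite <- IH; ring]. Qed.

Lemma sum_list_scaler (f : V -> C) c F :
  (sum_list f F * c)%C = sum_list (fun x => f x * c)%C F.
Proof. induction F as [|a F IH]; simpl; [ring | rewrite <- IH; ring]. Qed.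

Lemma sum_list_swap (g : V -> V -> C) X Y :
  sum_list (fun x => sum_list (g x) Y) X = sum_list (fun y => sum_list (fun x => g x y) X) Y.
Proof.
  revert Y; induction X as [|a X IH]; intros Y; simpl.
  - induction Y as [|b Y IHY]; simpl; [reflexivity | rewrite <- IHY; ring].
  - rewrite IH. clear IH.
    induction Y as [|b Y IHY]; simpl; [ring | rewrite <- IHY; ring].
Qed.

Lemma supported_in_sum_list (g : V -> V -> C) s Y :
  (forall y, In y Y -> supported_in (fun x => g x y) s) ->
  supported_in (fun x => sum_list (g x) Y) s.
Proof.
  intros H x Hx. destruct (in_dec vdec x s) as [|Hxs]; auto.
  exfalso; apply Hx. clear Hx.
  induction Y as [|y Y IH]; simpl; auto.
  destruct (excluded_middle_informative (g x y = RtoC 0)) as [E|E].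
  - rewrite E, IH by (intros z Hz; apply H; simpl; auto). ring.
  - exfalso. apply Hxs, (H y); simpl; auto.
Qed.

Lemma supported_in_union (g : V -> V -> C) :
  (forall y, exists s, supported_in (g y) s) ->
  forall Y, exists s, forall y, In y Y -> supported_in (g y) s.
Proof.
  intros H Y. induction Y as [|y Y [s Hs]].
  - exists nil. intros y [].
  - destruct (H y) as [sy Hsy]. exists (sy ++ s).
    intros z [<- | Hz] x Hx; apply in_or_app; [left | right]; auto.
    apply (Hs z); auto.
Qed.

Lemma has_sum_unique (f : V -> C) S1 S2 : has_sum f S1 -> has_sum f S2 -> S1 = S2.
Proof.
  intros H1 H2.
  destruct (Req_dec (Cmod (S1 - S2)%C) 0) as [E|Hne].
  - apply Cmod_eq_0 in E.
    replace S1 with ((S1 - S2) + S2)%C by ring. rewrite E. ring.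
  - set (e := Cmod (S1 - S2)%C / 2).
    assert (He : 0 < e) by (pose proof (Cmod_ge_0 (S1 - S2)%C); unfold e; lra).
    destruct (H1 e He) as [F1 HF1], (H2 e He) as [F2 HF2].
    set (F := nodup vdec (F1 ++ F2)).
    assert (NF : NoDup F) by apply NoDup_nodup.
    specialize (HF1 F NF). specialize (HF2 F NF).
    assert (e1 : Cmod (sum_list f F - S1)%C < e)
      by (apply HF1; intros x Hx; apply nodup_In, in_or_app; auto).
    assert (e2 : Cmod (sum_list f F - S2)%C < e)
      by (apply HF2; intros x Hx; apply nodup_In, in_or_app; auto).
    assert (Cmod (S1 - S2)%C <= Cmod (sum_list f F - S2)%C + Cmod (sum_list f F - S1)%C).
    { replace (S1 - S2)%C with ((sum_list f F - S2) + - (sum_list f F - S1))%C by ring.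
      rewrite <- (Cmod_opp (sum_list f F - S1)%C). apply Cmod_triangle. }
    unfold e in *. lra.
Qed.

Lemma tsum_eq (f : V -> C) S : has_sum f S -> tsum f = S.
Proof.
  intros H. apply (has_sum_unique (f := f)); auto.
  exact (epsilon_spec (inhabits (RtoC 0)) (has_sum f) (ex_intro _ S H)).
Qed.

Lemma tsum_supported (f : V -> C) s :
  NoDup s -> supported_in f s -> tsum f = sum_list f s.
Proof.
  intros Ns fs. apply tsum_eq. intros e He. exists s. intros F NF sF.
  rewrite (sum_list_supported Ns NF sF fs).
  replace (sum_list f s - sum_list f s)%C with (RtoC 0) by ring.
  rewrite Cmod_0. exact He.
Qed.

Lemma tsum_supported_nodup (f : V -> C) s :
  supported_in f s -> tsum f = sum_list f (nodup vdec s).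
Proof.
  intros fs. apply tsum_supported; [apply NoDup_nodup|].
  intros x Hx. apply nodup_In; auto.
Qed.

Lemma tsum_single (f : V -> C) a : (forall x, x <> a -> f x = RtoC 0) -> tsum f = f a.
Proof.
  intros H. rewrite (@tsum_supported f (a :: nil)).
  - simpl. ring.
  - repeat constructor; auto.
  - intros x Hx. destruct (vdec x a); simpl; auto.
Qed.

End FiniteSums.

Arguments vdec {V} x y.

Lemma Cconj_RtoC (r : R) : Cconj (RtoC r) = RtoC r.
Proof. apply injective_projections; simpl; ring. Qed.

Lemma Cmult_RtoC_cancel (a b : C) (r : R) : r <> 0 -> (a * r)%C = (b * r)%C -> a = b.
Proof.
  intros Hr H. assert (Hc : RtoC r <> RtoC 0) by (intros E; apply Hr; injection E; auto).
  replace a with (a * r * / r)%C by (field; auto).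
  rewrite H. field; auto.
Qed.

Section Kernel.
Variables (V : Type) (m : V -> R) (l : V -> V -> C).

Definition delta (y : V) : V -> C := fun x => if vdec x y then RtoC 1 else RtoC 0.

Definition hermitian : Prop := forall x y, l x y = Cconj (l y x).

Definition finite_rows : Prop := forall x, exists s, supported_in (l x) s.

Lemma finsupp_delta y : finsupp (delta y).
Proof.
  exists (y :: nil). intros x. unfold delta.
  destruct (vdec x y); [left; auto | congruence].
Qed.

Lemma delta_off y x : x <> y -> delta y x = RtoC 0.
Proof. unfold delta. destruct (vdec x y); congruence. Qed.

Lemma delta_at y : delta y y = RtoC 1.
Proof. unfold delta. destruct (vdec y y); congruence. Qed.

Lemma ip_delta_r g y : ip m g (delta y) = (Cconj (g y) * m y)%C.
Proof.
  unfold ip. rewrite (@tsum_single _ _ y), delta_at; [ring|].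
  intros x Hx. rewrite delta_off by auto. ring.
Qed.

Lemma ip_delta_l g x : ip m (delta x) g = (g x * m x)%C.
Proof.
  unfold ip. rewrite (@tsum_single _ _ x), delta_at, Cconj_RtoC; [ring|].
  intros z Hz. rewrite delta_off by auto. rewrite Cconj_RtoC. ring.
Qed.

Lemma Ltilde_delta y x : Ltilde m l (delta y) x = (l x y * m y)%C.
Proof.
  unfold Ltilde. rewrite (@tsum_single _ _ y), delta_at; [ring|].
  intros z Hz. rewrite delta_off by auto. ring.
Qed.

Lemma ip_scalel c g u : finsupp u -> ip m (fun x => c * g x)%C u = (Cconj c * ip m g u)%C.
Proof.
  intros [s Hs]. unfold ip.
  assert (supp : forall h : V -> C, supported_in (fun x => h x * u x * m x)%C s).
  { intros h x Hx. apply Hs. intros E. apply Hx. rewrite E. ring. }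
  rewrite !(@tsum_supported_nodup _ _ s) by apply supp.
  rewrite sum_list_scalel. apply sum_list_ext. intros x _.
  rewrite Cmult_conj. ring.
Qed.

Lemma ip_Ltilde_adjoint g u :
  hermitian -> finite_rows -> finsupp u ->
  ip m g (Ltilde m l u) = ip m (Ltilde m l g) u.
Proof.
  intros herm rows [su Hsu].
  set (Y := nodup vdec su).
  destruct (supported_in_union l rows Y) as [sX HX].
  set (X := nodup vdec sX).
  set (k x y := (Cconj (g x) * (l x y * u y * m y) * m x)%C).
  assert (Lu : forall x, Ltilde m l u x = sum_list (fun y => l x y * u y * m y)%C Y).
  { intros x. apply tsum_supported_nodup.
    intros y Hy. apply Hsu. intros E. apply Hy. rewrite E. ring. }
  assert (Lg : forall y, In y Y ->
    Ltilde m l g y = sum_list (fun x => l y x * g x * m x)%C X).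
  { intros y Hy. apply tsum_supported_nodup.
    intros x Hx. apply (HX y Hy). intros E. apply Hx. rewrite E. ring. }
  (* By Hermitian symmetry, the rows [l y .] with [y] in [supp u] also bound the columns. *)
  assert (supp_k : forall y, In y Y -> supported_in (fun x => k x y) sX).
  { intros y Hy x Hx. apply (HX y Hy). rewrite herm. intros E. apply Hx.
    unfold k. rewrite <- (Cconj_conj (l x y)), E, Cconj_RtoC. ring. }
  transitivity (sum_list (fun x => sum_list (k x) Y) X).
  { unfold ip. rewrite (@tsum_supported_nodup _ _ sX).
    - apply sum_list_ext. intros x _. rewrite Lu, sum_list_scalel, sum_list_scaler.
      reflexivity.
    - intros x Hx. apply (@supported_in_sum_list _ k sX Y supp_k).
      intros E. apply Hx. rewrite Lu, sum_list_scalel, sum_list_scaler. exact E. }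
  rewrite sum_list_swap. unfold ip.
  rewrite (@tsum_supported_nodup _ _ su).
  2:{ intros y Hy. apply Hsu. intros E. apply Hy. rewrite E. ring. }
  apply sum_list_ext. intros y Hy.
  rewrite Lg, sum_list_conj, sum_list_scaler, sum_list_scaler by exact Hy.
  apply sum_list_ext. intros x _. unfold k.
  rewrite (herm x y), !Cmult_conj, !Cconj_RtoC. ring.
Qed.

End Kernel.

Section SelfadjointLocallyFinite.
Variables (V : Type) (m : V -> R) (D : (V -> C) -> Prop) (L : (V -> C) -> V -> C)
  (l : V -> V -> C).
Hypothesis m_pos : forall x, 0 < m x.
Hypothesis HLsa : selfadjoint m D L.
Hypothesis HLlf : locally_finite_kernel m D L l.

Lemma selfadjoint_symmetric v u : D v -> D u -> ip m v (L u) = ip m (L v) u.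
Proof.
  destruct HLsa as [_ [Hdom Hact]]. intros Dv Du.
  destruct (proj1 (Hdom v) Dv) as [_ [w [l2w Hw]]].
  rewrite Hw by exact Du. f_equal.
  apply functional_extensionality. intros x. symmetry. exact (Hact v w Dv l2w Hw x).
Qed.

Lemma L_eq_Ltilde u : finsupp u -> L u = Ltilde m l u.
Proof.
  destruct HLlf as [Hfin [_ Hker]]. intros fu.
  apply functional_extensionality. intros x. apply Hker, Hfin, fu.
Qed.

Lemma kernel_hermitian : hermitian l.
Proof.
  destruct HLlf as [Hfin _].
  intros x y.
  assert (E := selfadjoint_symmetric (Hfin _ (finsupp_delta x)) (Hfin _ (finsupp_delta y))).
  rewrite !L_eq_Ltilde, ip_delta_r, ip_delta_l, !Ltilde_delta, Cmult_conj, Cconj_RtoC in E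
    by apply finsupp_delta.
  apply (Cmult_RtoC_cancel (r := m x * m y)); [pose proof (m_pos x); pose proof (m_pos y); nra|].
  rewrite RtoC_mult.
  transitivity (l x y * m y * m x)%C; [ring|].
  rewrite E. ring.
Qed.

Lemma ip_L_Ltilde phi u : finsupp u -> ip m phi (L u) = ip m (Ltilde m l phi) u.
Proof.
  intros fu. rewrite L_eq_Ltilde by exact fu.
  apply ip_Ltilde_adjoint; [exact kernel_hermitian | exact (proj1 (proj2 HLlf)) | exact fu].
Qed.

Lemma finsupp_L_delta y : finsupp (L (delta y)).
Proof.
  destruct (proj1 (proj2 HLlf) y) as [s Hs]. exists s.
  intros x Hx. apply Hs. intros E. apply Hx.
  rewrite L_eq_Ltilde, Ltilde_delta, kernel_hermitian, E, Cconj_RtoC by apply finsupp_delta.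
  ring.
Qed.

End SelfadjointLocallyFinite.

Theorem lemma5p1 (V : Type)
  (Vcount : exists f : V -> nat, forall x y, f x = f y -> x = y)
  (m : V -> R) (m_pos : forall x, 0 < m x)
  (D : (V -> C) -> Prop) (L : (V -> C) -> (V -> C)) (l : V -> V -> C)
  (HLsa : selfadjoint m D L) (HLlf : locally_finite_kernel m D L l)
  (phi : V -> C) (lam : R) :
  gen_eigenfunction m l phi lam <-> Cc_eigenfunction m D L phi lam.
Proof.
  split.
  - intros Hgen u fu _ _.
    rewrite (ip_L_Ltilde m_pos HLsa HLlf phi fu).
    replace (Ltilde m l phi) with (fun x => lam * phi x)%C
      by (apply functional_extensionality; intros x; symmetry; apply Hgen).
    rewrite ip_scalel, Cconj_RtoC by exact fu. reflexivity.
  - intros Hcc y.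
    assert (Dy : D (delta y)) by apply HLlf, finsupp_delta.
    assert (E := Hcc (delta y) (finsupp_delta y) Dy (finsupp_L_delta m_pos HLsa HLlf y)).
    rewrite (ip_L_Ltilde m_pos HLsa HLlf phi (finsupp_delta y)), !ip_delta_r in E.
    assert (Econj : Cconj (Ltilde m l phi y) = (lam * Cconj (phi y))%C).
    { apply (Cmult_RtoC_cancel (r := m y)); [specialize (m_pos y); lra|].
      rewrite E. ring. }
    rewrite <- (Cconj_conj (Ltilde m l phi y)), Econj, Cmult_conj, Cconj_RtoC, Cconj_conj.
    reflexivity.
Qed.
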